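(* Let $n\ge 1$. Then $\mathrm{tr}^f_n\big(f(x_n)\big)=0$ in $\mathrm{QWA}^f_{n-1}(A;z)$, where $f(x_n):=\sum_{i=0}^{l} f_i^{(n)}x_n^{\,l-i}\in\mathrm{QWA}^f_n(A;z)$.
   Context: Let $\Bbbk$ be a commutative ring, $z,t\in\Bbbk^\times$, and $A$ a symmetric Frobenius superalgebra over $\Bbbk$ with even trace $\mathrm{tr}$ (so $\mathrm{tr}(ab)=(-1)^{\bar a\bar b}\mathrm{tr}(ba)$), homogeneous basis $B_A$ and dual basis $\{b^\vee\}$ with $\mathrm{tr}(b^\vee c)=\delta_{b,c}$. Tensor factors of $A^{\otimes n}$ are numbered from right to left; for $a\in A$, $a^{(i)}:=1^{\otimes(n-i)}\otimes a\otimes 1^{\otimes(i-1)}$, and $\tau_i:=1^{\otimes(n-i-1)}\otimes\big(\sum_{b\in B_A}b\otimes b^\vee\big)\otimes1^{\otimes(i-1)}$. The quantum affine wreath product algebra $\mathrm{QAWA}_n(A;z)$ is the superalgebra generated by $A^{\otimes n}$, even invertible commuting $x_1,\dots,x_n$ and even $\sigma_1,\dots,\sigma_{n-1}$, subject to: $\sigma_i\sigma_j=\sigma_j\sigma_i$ for $|i-j|>1$; $\sigma_i\sigma_{i+1}\sigma_i=\sigma_{i+1}\sigma_i\sigma_{i+1}$; $\sigma_i^2=z\tau_i\sigma_i+1$; $\sigma_i\mathbf a=s_i(\mathbf a)\sigma_i$ for $\mathbf a\in A^{\otimes n}$ ($s_i$ superpermutes factors $i,i+1$); $\sigma_ix_j=x_j\sigma_i$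 for $j\ne i,i+1$; $\sigma_ix_i\sigma_i=x_{i+1}$; $x_i\mathbf a=\mathbf a x_i$. Fix $f(w)=f_0w^l+f_1w^{l-1}+\dots+f_l\in Z(A)_{\bar 0}[w]$ ($Z(A)_{\bar0}$ the even part of the supercenter) with $f_0=1$ and $f_l=t^2$. For $l\ge1$, the quantum cyclotomic wreath product algebra $\mathrm{QWA}^f_n(A;z)$ is the quotient of $\mathrm{QAWA}_n(A;z)$ by the two-sided ideal generated by $f(x_1)=\sum_i f_i^{(1)}x_1^{l-i}$; $\mathrm{QWA}^f_0:=\Bbbk$; if $l=0$ then $\mathrm{QWA}_n^f:=0$ for $n>0$. It is known that $\mathrm{QWA}^f_n$ embeds in $\mathrm{QWA}^f_{n+1}$ via $x_i\mapsto x_i$, $\sigma_j\mapsto\sigma_j$, $\mathbf a\mapsto 1\otimes\mathbf a$, and that there is a unique $(\mathrm{QWA}^f_n,\mathrm{QWA}^f_n)$-bimodule homomorphism $\mathrm{tr}^f_{n+1}:\mathrm{QWA}^f_{n+1}\to\mathrm{QWA}^f_n$ with $\mathrm{tr}^f_{n+1}(\sigma_n)=0$ and $\mathrm{tr}^f_{n+1}(a^{(n+1)}x_{n+1}^r)=\delta_{r,0}\mathrm{tr}(a)$ for $a\in A$, $0\le r<l$. *)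

From HB Require Import structures.
From mathcomp Require Import all_boot all_algebra.
Set Implicit Arguments. Unset Strict Implicit. Unset Printing Implicit Defensive.
Import GRing.Theory.
Local Open Scope ring_scope.

(* Symmetric Frobenius superalgebras over a commutative ring k, given through *)
(* a finite homogeneous k-basis B_A (with parities), a dual basis and an even *)
(* supersymmetric trace.                                                      *)
Record symFrobData (k : comNzRingType) (A : algType k) := SymFrobData {
  sf_B : finType;
  sf_b : sf_B -> A;
  sf_par : sf_B -> bool;   (* parity of each basis element (true = odd) *)
  sf_dual : sf_B -> A;
  sf_tr : A -> k
}.
Arguments sf_B {k A} s.
Arguments sf_b {k A} s _.
Arguments sf_par {k A} s _.
Arguments sf_dual {k A} s _.
Arguments sf_tr {k A} s _.

Section SuperFrob.
Variables (k : comNzRingType) (A : algType k) (F : symFrobData A).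

Definition homog (p : bool) (a : A) : Prop :=
  exists c : sf_B F -> k, a = \sum_(b | sf_par F b == p) c b *: sf_b F b.

Definition symFrob_axioms : Prop :=
  (forall a : A, exists c : sf_B F -> k, a = \sum_b c b *: sf_b F b) /\
  (forall c : sf_B F -> k, \sum_b c b *: sf_b F b = 0 -> forall b, c b = 0) /\
  homog false 1 /\
  (forall p q (a b : A), homog p a -> homog q b -> homog (p (+) q) (a * b)) /\
  (forall (c : k) (a b : A), sf_tr F (c *: a + b) = c * sf_tr F a + sf_tr F b) /\
  (forall a, homog true a -> sf_tr F a = 0) /\
  (forall p q (a b : A), homog p a -> homog q b ->
      sf_tr F (a * b) = (-1) ^+ (p && q) * sf_tr F (b * a)) /\
  (forall b c, sf_tr F (sf_dual F b * sf_b F c) = (b == c)%:R).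

End SuperFrob.

(* Elements are formal k-algebra terms in the generators; the algebra is the  *)
(* quotient of the term algebra by the congruence [qeq n] generated by the    *)
(* axioms of an associative unital k-algebra and the defining relations.      *)
(* To have one term language for all n, the generators carry arbitrary nat    *)
(* indices, and generators with out-of-range index are set to 0 in level n    *)
(* (this does not change the presented algebra).                              *)
Section Presentation.
Variables (k : comNzRingType) (A : algType k).

Inductive gen :=
  | GA of nat & A
  | GX of nat
  | GXi of nat
  | GS of nat.

Inductive term :=
  | tG of gen
  | tC of k
  | tAdd of term & term
  | tMul of term & term.

Fixpoint tpow (u : term) (r : nat) : term :=
  if r is r'.+1 then tMul u (tpow u r') else tC 1.

Definition tsum (s : seq term) : term := foldr tAdd (tC 0) s.

Definition inA (n i : nat) : bool := (0 < i <= n)%N.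
Definition inS (n i : nat) : bool := (0 < i < n)%N.

Definition gen_inrange (n : nat) (g : gen) : bool :=
  match g with
  | GA i _ => inA n i | GX i => inA n i | GXi i => inA n i | GS i => inS n i
  end.

Fixpoint inrange (n : nat) (u : term) : bool :=
  match u with
  | tG g => gen_inrange n g
  | tC _ => true
  | tAdd u v => inrange n u && inrange n v
  | tMul u v => inrange n u && inrange n v
  end.

Definition swapi (i j : nat) : nat :=
  if j == i then i.+1 else if j == i.+1 then i else j.

Variables (F : symFrobData A) (z : k) (f : nat -> A) (l : nat).

Definition tau (i : nat) : term :=
  tsum [seq tMul (tG (GA i.+1 (sf_b F b))) (tG (GA i (sf_dual F b))) | b <- enum (sf_B F)].

Definition fpoly (i : nat) : term :=
  tsum [seq tMul (tG (GA i (f j))) (tpow (tG (GX i)) (l - j)) | j <- iota 0 l.+1].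

Inductive qrel (n : nat) : term -> term -> Prop :=
  | r_Aadd i a b : inA n i ->
      qrel n (tG (GA i (a + b))) (tAdd (tG (GA i a)) (tG (GA i b)))
  | r_Ascal i c a : inA n i ->
      qrel n (tG (GA i (c *: a))) (tMul (tC c) (tG (GA i a)))
  | r_Amul i a b : inA n i ->
      qrel n (tG (GA i (a * b))) (tMul (tG (GA i a)) (tG (GA i b)))
  | r_Aone i : inA n i -> qrel n (tG (GA i 1)) (tC 1)
  | r_Acomm i j p q a b : inA n i -> inA n j -> i != j ->
      homog F p a -> homog F q b ->
      qrel n (tMul (tG (GA i a)) (tG (GA j b)))
             (tMul (tC ((-1) ^+ (p && q))) (tMul (tG (GA j b)) (tG (GA i a))))
  | r_Xinv1 i : inA n i -> qrel n (tMul (tG (GX i)) (tG (GXi i))) (tC 1)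
  | r_Xinv2 i : inA n i -> qrel n (tMul (tG (GXi i)) (tG (GX i))) (tC 1)
  | r_Xcomm i j : inA n i -> inA n j ->
      qrel n (tMul (tG (GX i)) (tG (GX j))) (tMul (tG (GX j)) (tG (GX i)))
  | r_Sfar i j : inS n i -> inS n j -> ((i.+1 < j) || (j.+1 < i))%N ->
      qrel n (tMul (tG (GS i)) (tG (GS j))) (tMul (tG (GS j)) (tG (GS i)))
  | r_Sbraid i : inS n i -> inS n i.+1 ->
      qrel n (tMul (tG (GS i)) (tMul (tG (GS i.+1)) (tG (GS i))))
             (tMul (tG (GS i.+1)) (tMul (tG (GS i)) (tG (GS i.+1))))
  | r_Squad i : inS n i ->
      qrel n (tMul (tG (GS i)) (tG (GS i)))
             (tAdd (tMul (tC z) (tMul (tau i) (tG (GS i)))) (tC 1))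
  | r_SA i j a : inS n i -> inA n j ->
      qrel n (tMul (tG (GS i)) (tG (GA j a))) (tMul (tG (GA (swapi i j) a)) (tG (GS i)))
  | r_SX i j : inS n i -> inA n j -> j != i -> j != i.+1 ->
      qrel n (tMul (tG (GS i)) (tG (GX j))) (tMul (tG (GX j)) (tG (GS i)))
  | r_SXS i : inS n i ->
      qrel n (tMul (tG (GS i)) (tMul (tG (GX i)) (tG (GS i)))) (tG (GX i.+1))
  | r_XA i j a : inA n i -> inA n j ->
      qrel n (tMul (tG (GX i)) (tG (GA j a))) (tMul (tG (GA j a)) (tG (GX i)))
  | r_kill g : ~~ gen_inrange n g -> qrel n (tG g) (tC 0)
  (* cyclotomic relation f(x_1) = 0 (only for n > 0; QWA_0 = k) *)
  | r_cyc : (0 < n)%N -> qrel n (fpoly 1) (tC 0).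

Inductive qeq (n : nat) : term -> term -> Prop :=
  | q_base u v : qrel n u v -> qeq n u v
  | q_refl u : qeq n u u
  | q_sym u v : qeq n u v -> qeq n v u
  | q_trans u v w : qeq n u v -> qeq n v w -> qeq n u w
  | q_add u u' v v' : qeq n u u' -> qeq n v v' -> qeq n (tAdd u v) (tAdd u' v')
  | q_mul u u' v v' : qeq n u u' -> qeq n v v' -> qeq n (tMul u v) (tMul u' v')
  | q_addA u v w : qeq n (tAdd u (tAdd v w)) (tAdd (tAdd u v) w)
  | q_addC u v : qeq n (tAdd u v) (tAdd v u)
  | q_add0 u : qeq n (tAdd u (tC 0)) u
  | q_addN u : qeq n (tAdd u (tMul (tC (-1)) u)) (tC 0)
  | q_mulA u v w : qeq n (tMul u (tMul v w)) (tMul (tMul u v) w)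
  | q_mul1l u : qeq n (tMul (tC 1) u) u
  | q_mul1r u : qeq n (tMul u (tC 1)) u
  | q_mulDl u v w : qeq n (tMul (tAdd u v) w) (tAdd (tMul u w) (tMul v w))
  | q_mulDr u v w : qeq n (tMul u (tAdd v w)) (tAdd (tMul u v) (tMul u w))
  | q_Cadd c d : qeq n (tC (c + d)) (tAdd (tC c) (tC d))
  | q_Cmul c d : qeq n (tC (c * d)) (tMul (tC c) (tC d))
  | q_Ccomm c u : qeq n (tMul (tC c) u) (tMul u (tC c)).

End Presentation.

From Pilot Require Import Defs.
From HB Require Import structures.
From mathcomp Require Import all_boot all_algebra.
From mathcomp Require Import zify.
From Stdlib Require Import Setoid Morphisms.
Set Implicit Arguments. Unset Strict Implicit. Unset Printing Implicit Defensive.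
Import GRing.Theory.
Local Open Scope ring_scope.

(* For l > 0 one proves, by induction on q, that
     tr(sigma_{n-1} ... sigma_q f(x_q) sigma_q ... sigma_{n-1}) = 0   for 1 <= q <= n;
   q = 1 is the cyclotomic relation and q = n is the claim.  The induction step rests on
     f(x_{q+1}) = sigma_q f(x_q) sigma_q + z R_q sigma_q,
   where R_q is a combination of terms a^(q+1) x_{q+1}^j tau_q x_q^m with j < l.  Expanding
   tau_q in the basis, the factors of index <= q supercommute (up to a sign) with
   sigma_{q+1}, ..., sigma_{n-1} and lie in QWA_{n-1}, so the bimodule property pulls them out
   of the trace; what is left is
     tr(sigma_{n-1} ... sigma_{q+1} a^(q+1) x_{q+1}^j sigma_q sigma_{q+1} ... sigma_{n-1}),
   which vanishes by descending induction on q via the braid relation, down to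
   tr(a^(n) x_n^j sigma_{n-1}) = tr(sigma_{n-1}) a^(n-1) x_{n-1}^j + z (terms tr(b^(n) x_n^s)
   with 0 < s < l) = 0.  For l = 0 the cyclotomic relation reads 1 = 0. *)

#[global] Instance qeq_Equivalence (k : comNzRingType) (A : algType k)
  (F : symFrobData A) z f l N : Equivalence (qeq F z f l N).
Proof. by split; [exact: q_refl | exact: q_sym | exact: q_trans]. Qed.

#[global] Instance qeq_RewriteRelation (k : comNzRingType) (A : algType k)
  (F : symFrobData A) z f l N : RewriteRelation (qeq F z f l N) := {}.

#[global] Instance tAdd_Proper (k : comNzRingType) (A : algType k)
  (F : symFrobData A) z f l N :
  Proper (qeq F z f l N ==> qeq F z f l N ==> qeq F z f l N) (@tAdd k A).
Proof. by move=> ? ? ? ? ? ?; apply: q_add. Qed.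

#[global] Instance tMul_Proper (k : comNzRingType) (A : algType k)
  (F : symFrobData A) z f l N :
  Proper (qeq F z f l N ==> qeq F z f l N ==> qeq F z f l N) (@tMul k A).
Proof. by move=> ? ? ? ? ? ?; apply: q_mul. Qed.

#[global] Hint Resolve q_refl : core.

Infix "⊕" := tAdd (at level 50, left associativity).
Infix "⊗" := tMul (at level 40, left associativity).
Notation ga i a := (tG (GA i a)).
Notation xg i := (tG (GX _ i)).
Notation sg i := (tG (GS _ i)).

Section TermAlgebra.
Context {k : comNzRingType} {A : algType k} {F : symFrobData A}.
Context {z : k} {f : nat -> A} {l N : nat}.
Local Notation "u ≡ v" := (qeq F z f l N u v) (at level 70).
Local Notation tC := (@tC k A).
Implicit Types (u v w : term A) (c d : k).

Lemma taddA u v w : u ⊕ (v ⊕ w) ≡ u ⊕ v ⊕ w. Proof. exact: q_addA. Qed.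
Lemma taddC u v : u ⊕ v ≡ v ⊕ u. Proof. exact: q_addC. Qed.
Lemma tadd0 u : u ⊕ tC 0 ≡ u. Proof. exact: q_add0. Qed.
Lemma tadd0l u : tC 0 ⊕ u ≡ u. Proof. by rewrite taddC tadd0. Qed.
Lemma tmulA u v w : u ⊗ (v ⊗ w) ≡ u ⊗ v ⊗ w. Proof. exact: q_mulA. Qed.
Lemma tmul1l u : tC 1 ⊗ u ≡ u. Proof. exact: q_mul1l. Qed.
Lemma tmul1r u : u ⊗ tC 1 ≡ u. Proof. exact: q_mul1r. Qed.
Lemma tmulDl u v w : (u ⊕ v) ⊗ w ≡ u ⊗ w ⊕ v ⊗ w. Proof. exact: q_mulDl. Qed.
Lemma tmulDr u v w : u ⊗ (v ⊕ w) ≡ u ⊗ v ⊕ u ⊗ w. Proof. exact: q_mulDr. Qed.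
Lemma tCD c d : tC c ⊕ tC d ≡ tC (c + d). Proof. by symmetry; exact: q_Cadd. Qed.
Lemma tCM c d : tC c ⊗ tC d ≡ tC (c * d). Proof. by symmetry; exact: q_Cmul. Qed.
Lemma tC_comm c u : tC c ⊗ u ≡ u ⊗ tC c. Proof. exact: q_Ccomm. Qed.

Lemma tC_mulA c d u : tC c ⊗ (tC d ⊗ u) ≡ tC (c * d) ⊗ u.
Proof. by rewrite tmulA tCM. Qed.

Lemma tCDl c d u : tC c ⊗ u ⊕ tC d ⊗ u ≡ tC (c + d) ⊗ u.
Proof. by rewrite -tmulDl tCD. Qed.

Lemma tC_mulCA u c v : u ⊗ (tC c ⊗ v) ≡ tC c ⊗ (u ⊗ v).
Proof. by rewrite tmulA -tC_comm -tmulA. Qed.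

Lemma taddK u v : u ⊕ v ⊕ tC (-1) ⊗ v ≡ u.
Proof. by rewrite -taddA q_addN tadd0. Qed.

Lemma taddIr u v w : u ⊕ w ≡ v ⊕ w -> u ≡ v.
Proof. by move=> uv; rewrite -(taddK u w) uv taddK. Qed.


Lemma tmul0l u : tC 0 ⊗ u ≡ tC 0.
Proof.
have u00 : tC 0 ⊗ u ≡ tC 0 ⊗ u ⊕ tC 0 ⊗ u by rewrite tCDl addr0.
by rewrite -(taddK (tC 0 ⊗ u) (tC 0 ⊗ u)) -u00 q_addN.
Qed.

Lemma tmul0r u : u ⊗ tC 0 ≡ tC 0.
Proof. by rewrite -tC_comm tmul0l. Qed.

Lemma tadd_scaleK c u v : tC c ⊗ u ⊕ v ⊕ tC (- c) ⊗ u ≡ v.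
Proof. by rewrite (taddC (tC c ⊗ u)) -taddA tCDl subrr tmul0l tadd0. Qed.

Lemma tsum_eq (I : eqType) (s : seq I) (g h : I -> term A) :
  (forall x, x \in s -> g x ≡ h x) -> tsum [seq g x | x <- s] ≡ tsum [seq h x | x <- s].
Proof.
elim: s => [|x s IHs] gh //=; rewrite (gh x (mem_head _ _)) IHs //.
by move=> y ys; apply: gh; rewrite in_cons ys orbT.
Qed.

Lemma tsum_add (I : Type) (s : seq I) (g h : I -> term A) :
  tsum [seq g x | x <- s] ⊕ tsum [seq h x | x <- s] ≡ tsum [seq g x ⊕ h x | x <- s].
Proof.
elim: s => [|x s IHs] /=; first by rewrite tadd0.
rewrite -IHs -!taddA; apply: q_add => //.
by rewrite taddC -!taddA; apply: q_add => //; rewrite taddC.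
Qed.

Lemma tsum_mull (I : Type) (s : seq I) (g : I -> term A) u :
  u ⊗ tsum [seq g x | x <- s] ≡ tsum [seq u ⊗ g x | x <- s].
Proof. by elim: s => [|x s IHs] /=; [rewrite tmul0r | rewrite tmulDr IHs]. Qed.

Lemma tsum_mulr (I : Type) (s : seq I) (g : I -> term A) u :
  tsum [seq g x | x <- s] ⊗ u ≡ tsum [seq g x ⊗ u | x <- s].
Proof. by elim: s => [|x s IHs] /=; [rewrite tmul0l | rewrite tmulDl IHs]. Qed.

Lemma tsum_const0 (I : Type) (s : seq I) : tsum [seq tC 0 | x <- s] ≡ tC 0.
Proof. by elim: s => [|x s IHs] //=; rewrite IHs tadd0. Qed.

Lemma tsum_swap (I J : Type) (s1 : seq I) (s2 : seq J) (g : I -> J -> term A) :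
  tsum [seq tsum [seq g x y | y <- s2] | x <- s1] ≡
  tsum [seq tsum [seq g x y | x <- s1] | y <- s2].
Proof.
elim: s1 => [|x s1 IHs] /=; first by rewrite tsum_const0.
by rewrite IHs tsum_add.
Qed.

Lemma tpowSr u r : tpow u r.+1 ≡ tpow u r ⊗ u.
Proof.
elim: r => [|r IHr] /=; first by rewrite tmul1r tmul1l.
by rewrite -tmulA -IHr.
Qed.

End TermAlgebra.

Section Frobenius.
Variables (k : comNzRingType) (A : algType k) (F : symFrobData A).
Hypothesis HF : symFrob_axioms F.
Local Notation B := (sf_B F).
Local Notation bb := (sf_b F).
Local Notation dd := (sf_dual F).
Local Notation tr := (sf_tr F).
Local Notation par := (sf_par F).

Lemma sf_span a : exists c : B -> k, a = \sum_b c b *: bb b.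
Proof. by case: HF. Qed.

Lemma homogM p q (a b : A) : homog F p a -> homog F q b -> homog F (p (+) q) (a * b).
Proof. by case: HF => _ [_ [_ [homM _]]]; apply: homM. Qed.

Lemma tr_lin (c : k) (a b : A) : tr (c *: a + b) = c * tr a + tr b.
Proof. by case: HF => _ [_ [_ [_ [trL _]]]]; apply: trL. Qed.

Lemma tr_odd a : homog F true a -> tr a = 0.
Proof. by case: HF => _ [_ [_ [_ [_ [trO _]]]]]; apply: trO. Qed.

Lemma tr_supersym p q (a b : A) : homog F p a -> homog F q b ->
  tr (a * b) = (-1) ^+ (p && q) * tr (b * a).
Proof. by case: HF => _ [_ [_ [_ [_ [_ [trS _]]]]]]; apply: trS. Qed.

Lemma tr_dual b c : tr (dd b * bb c) = (b == c)%:R.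
Proof. by case: HF => _ [_ [_ [_ [_ [_ [_ trD]]]]]]; apply: trD. Qed.

Lemma tr0 : tr 0 = 0.
Proof.
have := tr_lin 1 0 0; rewrite scale1r addr0 mul1r => tr00.
by apply: (addIr (tr 0)); rewrite add0r -tr00.
Qed.

Lemma trD a b : tr (a + b) = tr a + tr b.
Proof. by have := tr_lin 1 a b; rewrite scale1r mul1r. Qed.

Lemma trZ c a : tr (c *: a) = c * tr a.
Proof. by rewrite -[c *: a]addr0 tr_lin tr0 addr0. Qed.

Lemma tr_sum (I : Type) (s : seq I) (P : pred I) (g : I -> A) :
  tr (\sum_(i <- s | P i) g i) = \sum_(i <- s | P i) tr (g i).
Proof. exact: (big_morph tr trD tr0). Qed.

Lemma basis_expansion a : a = \sum_c tr (dd c * a) *: bb c.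
Proof.
have [al ->] := sf_span a; apply: eq_bigr => c _; congr (_ *: _).
rewrite mulr_sumr tr_sum (bigD1 c) //= big1 ?addr0.
  by rewrite -scalerAr trZ tr_dual eqxx mulr1.
by move=> e /negbTE ne; rewrite -scalerAr trZ tr_dual eq_sym ne mulr0.
Qed.

Lemma tr_nondegenerate w : (forall e, tr (bb e * w) = 0) -> w = 0.
Proof.
move=> trw0; rewrite (basis_expansion w) big1 // => c _.
have [al ->] := sf_span (dd c).
by rewrite mulr_suml tr_sum big1 ?scale0r // => e _; rewrite -scalerAl trZ trw0 mulr0.
Qed.

Lemma homog_basis c : homog F (par c) (bb c).
Proof.
exists (fun e => (e == c)%:R); rewrite (bigD1 c) //= big1 ?addr0 ?eqxx ?scale1r //.
by move=> e /andP [_ /negbTE ->]; rewrite scale0r.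
Qed.

Lemma homogM_basis a c : (exists p, homog F p a) -> exists p, homog F p (a * bb c).
Proof. by case=> p ha; exists (p (+) par c); exact: homogM (homog_basis c). Qed.

Lemma tr_parity_neq p q a b : homog F p a -> homog F q b -> p != q -> tr (a * b) = 0.
Proof.
move=> ha hb pq; apply: tr_odd.
by have := homogM ha hb; case: p q pq {ha hb} => [] [].
Qed.

Lemma homog_dual c : homog F (par c) (dd c).
Proof.
set p := par c; pose al e := tr (dd e * dd c).
pose w' := \sum_(e | par e == p) al e *: bb e.
pose w := \sum_(e | par e == ~~ p) al e *: bb e.
have dd_split : dd c = w' + w.
  rewrite {1}(basis_expansion (dd c)) (bigID (fun e => par e == p)) /=.
  by congr (_ + _); apply: eq_bigl => e; case: (par e); case: (p).
have hw' : homog F p w' by exists al.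
have hw : homog F (~~ p) w by exists al.
suff w0 : w = 0 by rewrite dd_split w0 addr0.
apply: tr_nondegenerate => e; rewrite (tr_supersym (homog_basis e) hw).
suff -> : tr (w * bb e) = 0 by rewrite mulr0.
have [pe | pe] := eqVneq (par e) p.
  by apply: (tr_parity_neq hw (homog_basis e)); rewrite pe; case: (p).
have : tr (dd c * bb e) = 0.
  by rewrite tr_dual; case: eqP => // ce; move: pe; rewrite -ce eqxx.
by rewrite dd_split mulrDl trD (tr_parity_neq hw' (homog_basis e)) ?add0r // eq_sym.
Qed.

Lemma dual_expansion c : \sum_b ((-1) ^+ (par b) * tr (dd c * dd b)) *: bb b = dd c.
Proof.
rewrite [RHS]basis_expansion; apply: eq_bigr => b _; congr (_ *: _).
rewrite (tr_supersym (homog_dual b) (homog_dual c)).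
have [-> | ne] := eqVneq (par c) (par b).
  by rewrite andbb.
by rewrite (tr_parity_neq (homog_dual c) (homog_dual b)) ?mulr0.
Qed.

End Frobenius.

Section Relations.
Context {k : comNzRingType} {A : algType k} {F : symFrobData A}.
Context {z : k} {f : nat -> A} {l n : nat}.
Hypothesis HF : symFrob_axioms F.
Local Notation "u ≡ v" := (qeq F z f l n u v) (at level 70).
Local Notation tC := (@tC k A).
Local Notation B := (sf_B F).
Local Notation bb := (sf_b F).
Local Notation dd := (sf_dual F).
Local Notation tr := (sf_tr F).
Local Notation par := (sf_par F).
Local Notation tau := (tau F).

Lemma gaD i a b : (0 < i <= n)%N -> ga i (a + b) ≡ ga i a ⊕ ga i b.
Proof. by move=> ?; apply/q_base/r_Aadd. Qed.

Lemma gaZ i c a : (0 < i <= n)%N -> ga i (c *: a) ≡ tC c ⊗ ga i a.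
Proof. by move=> ?; apply/q_base/r_Ascal. Qed.

Lemma gaM i a b : (0 < i <= n)%N -> ga i (a * b) ≡ ga i a ⊗ ga i b.
Proof. by move=> ?; apply/q_base/r_Amul. Qed.

Lemma ga0 i : (0 < i <= n)%N -> ga i 0 ≡ tC 0.
Proof. by move=> hi; rewrite -(scale0r 1) gaZ // tmul0l. Qed.

Lemma ga_sum i (I : Type) (s : seq I) (al : I -> k) (v : I -> A) : (0 < i <= n)%N ->
  ga i (\sum_(x <- s) al x *: v x) ≡ tsum [seq tC (al x) ⊗ ga i (v x) | x <- s].
Proof.
move=> hi; elim: s => [|x s IHs]; first by rewrite big_nil ga0.
by rewrite big_cons /= gaD // gaZ // IHs.
Qed.

Lemma ga_comm i j p q a b : (0 < i <= n)%N -> (0 < j <= n)%N -> i != j ->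
  homog F p a -> homog F q b ->
  ga i a ⊗ ga j b ≡ tC ((-1) ^+ (p && q)) ⊗ (ga j b ⊗ ga i a).
Proof. by move=> *; apply/q_base/r_Acomm. Qed.

Lemma sigma_ga i j a : (0 < i < n)%N -> (0 < j <= n)%N ->
  sg i ⊗ ga j a ≡ ga (swapi i j) a ⊗ sg i.
Proof. by move=> *; apply/q_base/r_SA. Qed.

Lemma x_ga i j a : (0 < i <= n)%N -> (0 < j <= n)%N -> xg i ⊗ ga j a ≡ ga j a ⊗ xg i.
Proof. by move=> *; apply/q_base/r_XA. Qed.

Lemma xpow_ga i j a r : (0 < i <= n)%N -> (0 < j <= n)%N ->
  tpow (xg i) r ⊗ ga j a ≡ ga j a ⊗ tpow (xg i) r.
Proof.
move=> hi hj; elim: r => [|r IHr] /=; first by rewrite tmul1l tmul1r.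
by rewrite -tmulA IHr tmulA x_ga // tmulA.
Qed.

Lemma swapi_id i : swapi i i = i.+1.
Proof. by rewrite /swapi eqxx. Qed.

Lemma swapiS i : swapi i i.+1 = i.
Proof. by rewrite /swapi eqxx; case: eqP => // /n_Sn. Qed.

Lemma swapi_out i j : j != i -> j != i.+1 -> swapi i j = j.
Proof. by rewrite /swapi => /negbTE -> /negbTE ->. Qed.

Lemma ga_sigma i a : (0 < i < n)%N -> ga i.+1 a ⊗ sg i ≡ sg i ⊗ ga i a.
Proof. by move=> hs; rewrite sigma_ga ?swapi_id //; case/andP: hs => -> /ltnW. Qed.

Lemma tau_flip i : (0 < i < n)%N ->
  tsum [seq ga i (bb e) ⊗ ga i.+1 (dd e) | e <- enum B] ≡ tau i.
Proof.
case/andP=> i0 iN; have hi : (0 < i <= n)%N by rewrite i0 ltnW.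
have [hi1 ii1] : (0 < i.+1 <= n)%N /\ i != i.+1 by lia.
have dd_sum e :
    ga i.+1 (dd e) ≡ tsum [seq tC (tr (dd c * dd e)) ⊗ ga i.+1 (bb c) | c <- enum B].
  by rewrite {1}(basis_expansion HF (dd e)) ga_sum // enumT.
transitivity (tsum [seq tsum [seq ga i.+1 (bb c) ⊗
     (tC ((-1) ^+ par e * tr (dd c * dd e)) ⊗ ga i (bb e)) | c <- enum B] | e <- enum B]).
  apply: tsum_eq => e _.
  rewrite (ga_comm hi hi1 ii1 (homog_basis e) (homog_dual HF e)).
  rewrite andbb dd_sum tsum_mulr tsum_mull; apply: tsum_eq => c _.
  by rewrite -tmulA tC_mulA tC_mulCA.
rewrite tsum_swap /tau; apply: tsum_eq => c _.
rewrite -tsum_mull -[in X in _ ≡ _ ⊗ ga i X](dual_expansion HF c) ga_sum // enumT.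
by [].
Qed.

Lemma sigma_tau i : (0 < i < n)%N -> sg i ⊗ tau i ≡ tau i ⊗ sg i.
Proof.
move=> hs; have /andP [i0 iN] := hs.
have hi : (0 < i <= n)%N by rewrite i0 ltnW.
rewrite -{2}(tau_flip hs) /tau tsum_mull tsum_mulr; apply: tsum_eq => e _.
by rewrite tmulA sigma_ga // swapiS -tmulA sigma_ga // swapi_id !tmulA.
Qed.

Lemma sigma_sq i : (0 < i < n)%N -> sg i ⊗ sg i ≡ tC z ⊗ (tau i ⊗ sg i) ⊕ tC 1.
Proof. by move=> ?; apply/q_base/r_Squad. Qed.

Definition sigma_inv i := sg i ⊕ tC (- z) ⊗ tau i.

Lemma mulVsigma i : (0 < i < n)%N -> sigma_inv i ⊗ sg i ≡ tC 1.
Proof. by move=> hs; rewrite /sigma_inv tmulDl sigma_sq // -tmulA tadd_scaleK. Qed.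

Lemma mulsigmaV i : (0 < i < n)%N -> sg i ⊗ sigma_inv i ≡ tC 1.
Proof.
by move=> hs; rewrite /sigma_inv tmulDr tC_mulCA sigma_tau // sigma_sq // tadd_scaleK.
Qed.

Lemma x_sigma i : (0 < i < n)%N ->
  xg i.+1 ⊗ sg i ≡ sg i ⊗ xg i ⊕ tC z ⊗ (xg i.+1 ⊗ tau i).
Proof.
move=> hs.
have sigma_x : sg i ⊗ xg i ≡ xg i.+1 ⊗ sg i ⊕ tC (- z) ⊗ (xg i.+1 ⊗ tau i).
  rewrite -[X in X ≡ _]tmul1r -(mulsigmaV hs) tmulA -(tmulA (sg i)).
  have sxs : sg i ⊗ (xg i ⊗ sg i) ≡ xg i.+1 by apply/q_base/r_SXS.
  by rewrite sxs /sigma_inv tmulDr tC_mulCA.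
by rewrite sigma_x -taddA (taddC (tC (- z) ⊗ _)) tCDl subrr tmul0l tadd0.
Qed.

(* [xtau_sum i r] is the sum over 1 <= s <= r of x_{i+1}^s tau_i x_i^(r-s). *)
Fixpoint xtau_sum i r :=
  if r is r'.+1 then tpow (xg i.+1) r ⊗ tau i ⊕ xtau_sum i r' ⊗ xg i else tC 0.

Lemma xpow_sigma i r : (0 < i < n)%N ->
  tpow (xg i.+1) r ⊗ sg i ≡ sg i ⊗ tpow (xg i) r ⊕ tC z ⊗ xtau_sum i r.
Proof.
move=> hs; elim: r => [|r IHr] /=; first by rewrite tmul1l tmul1r tmul0r tadd0.
set X := xg i.+1; set Y := xg i; set S := sg i.
have step : tpow X r.+1 ⊗ S ≡ tpow X r ⊗ S ⊗ Y ⊕ tC z ⊗ (tpow X r.+1 ⊗ tau i).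
  rewrite tpowSr -(tmulA (tpow X r)) x_sigma // tmulDr; apply: q_add.
    exact: tmulA.
  by rewrite tC_mulCA (tmulA (tpow X r)).
rewrite step IHr tmulDl -(tmulA S) -tpowSr -(tmulA (tC z)) tmulDr -!taddA.
by apply: q_add => //; rewrite taddC.
Qed.

Definition fpoly_defect i := tsum [seq ga i.+1 (f j) ⊗
   (xtau_sum i (l - j) ⊕ tC (-1) ⊗ (tpow (xg i.+1) (l - j) ⊗ tau i)) | j <- iota 0 l.+1].

Lemma fpoly_conj i : (0 < i < n)%N ->
  fpoly f l i.+1 ≡ sg i ⊗ fpoly f l i ⊗ sg i ⊕ tC z ⊗ (fpoly_defect i ⊗ sg i).
Proof.
move=> hs; pose P := tsum [seq ga i.+1 (f j) ⊗ xtau_sum i (l - j) | j <- iota 0 l.+1].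
have fpoly_sigma : fpoly f l i.+1 ⊗ sg i ≡ sg i ⊗ fpoly f l i ⊕ tC z ⊗ P.
  rewrite /fpoly /P tsum_mulr !tsum_mull tsum_add; apply: tsum_eq => j _.
  by rewrite -tmulA xpow_sigma // tmulDr tmulA ga_sigma // -tmulA tC_mulCA.
have defect :
    tC z ⊗ P ⊕ tC (- z) ⊗ (fpoly f l i.+1 ⊗ tau i) ≡ tC z ⊗ fpoly_defect i.
  rewrite -[- z](mulrN1 z) -tC_mulA -tmulDr; apply: q_mul => //.
  rewrite /P /fpoly_defect /fpoly tsum_mulr tsum_mull tsum_add; apply: tsum_eq => j _.
  by rewrite tmulDr tC_mulCA -tmulA.
rewrite -[X in X ≡ _]tmul1r -(mulVsigma hs) tmulA /sigma_inv tmulDr fpoly_sigma tC_mulCA.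
by rewrite -taddA defect tmulDl -(tmulA (tC z)).
Qed.

Lemma ga_xpow_sigma i a j : (0 < i < n)%N ->
  ga i.+1 a ⊗ tpow (xg i.+1) j ⊗ sg i ≡
  sg i ⊗ (ga i a ⊗ tpow (xg i) j) ⊕ tC z ⊗ (ga i.+1 a ⊗ xtau_sum i j).
Proof.
move=> hs; rewrite -tmulA xpow_sigma // tmulDr tmulA ga_sigma // -tmulA tC_mulCA.
by [].
Qed.

Lemma sigma_ga_xpow i a j : (0 < i < n)%N ->
  sg i ⊗ (ga i a ⊗ tpow (xg i) j) ≡
  ga i.+1 a ⊗ tpow (xg i.+1) j ⊗ sg i ⊕ tC (- z) ⊗ (ga i.+1 a ⊗ xtau_sum i j).
Proof. by move=> hs; rewrite ga_xpow_sigma // -taddA tCDl subrr tmul0l tadd0. Qed.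

Lemma ga_xpow_tau i a j m : (0 < i < n)%N ->
  ga i.+1 a ⊗ (tpow (xg i.+1) j ⊗ tau i ⊗ tpow (xg i) m) ≡
  tsum [seq ga i.+1 (a * bb c) ⊗ tpow (xg i.+1) j ⊗ (ga i (dd c) ⊗ tpow (xg i) m)
       | c <- enum B].
Proof.
case/andP=> _ iN; rewrite /tau tsum_mull tsum_mulr tsum_mull; apply: tsum_eq => c _.
rewrite gaM // (tmulA (tpow (xg i.+1) j)) xpow_ga //.
by rewrite -!tmulA.
Qed.

End Relations.

Arguments xtau_sum {k A} F i r.
Arguments fpoly_defect {k A} F f l i.

Section Commutation.
Context {k : comNzRingType} {A : algType k} {F : symFrobData A}.
Context {z : k} {f : nat -> A} {l n : nat}.
Local Notation "u ≡ v" := (qeq F z f l n u v) (at level 70).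
Local Notation tC := (@tC k A).

Definition low_gen j (g : gen A) : Prop :=
  match g with
  | GA i a => (0 < i <= j)%N /\ exists p, homog F p a
  | GX i => (0 < i <= j)%N
  | GXi _ => False
  | GS i => (0 < i < j)%N
  end.

Definition high_gen j (g : gen A) : Prop :=
  match g with
  | GA i a => (j < i <= n)%N /\ exists p, homog F p a
  | GX i => (j < i <= n)%N
  | GXi _ => False
  | GS i => (j < i < n)%N
  end.

Fixpoint low_mono j (u : term A) : Prop :=
  match u with
  | tG g => low_gen j g
  | Defs.tC _ => True
  | tMul u v => low_mono j u /\ low_mono j v
  | tAdd _ _ => False
  end.

Fixpoint high_mono j (u : term A) : Prop :=
  match u with
  | tG g => high_gen j g
  | Defs.tC _ => True
  | tMul u v => high_mono j u /\ high_mono j v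
  | tAdd _ _ => False
  end.

Definition scomm V W := exists s, W ⊗ V ≡ tC s ⊗ (V ⊗ W).

Lemma scomm_tCl c W : scomm (tC c) W.
Proof. by exists 1; rewrite tmul1l tC_comm. Qed.

Lemma scomm_tCr V c : scomm V (tC c).
Proof. by exists 1; rewrite tmul1l tC_comm. Qed.

Lemma scommMr V W1 W2 : scomm V W1 -> scomm V W2 -> scomm V (W1 ⊗ W2).
Proof.
move=> [s1 e1] [s2 e2]; exists (s2 * s1).
rewrite -(tmulA W1) e2 tC_mulCA (tmulA W1) e1 -(tmulA (tC s1)) tC_mulA.
by rewrite (tmulA V).
Qed.

Lemma scommMl V1 V2 W : scomm V1 W -> scomm V2 W -> scomm (V1 ⊗ V2) W.
Proof.
move=> [s1 e1] [s2 e2]; exists (s1 * s2).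
rewrite (tmulA W) e1 -(tmulA (tC s1)) -(tmulA V1) e2 tC_mulCA tC_mulA.
by rewrite (tmulA V1).
Qed.

Lemma commute_scomm V W : W ⊗ V ≡ V ⊗ W -> scomm V W /\ scomm W V.
Proof. by move=> e; split; exists 1; rewrite tmul1l ?e. Qed.

Lemma gen_scomm j g h : (j <= n)%N -> low_gen j g -> high_gen j h ->
  scomm (tG g) (tG h) /\ scomm (tG h) (tG g).
Proof.
move=> jn; case: g => [i a|i|i|i]; case: h => [i' b|i'|i'|i'] //=.
- move=> [hi [p ha]] [hi' [q hb]]; split; eexists.
    by apply: ga_comm hb ha; lia.
  by apply: ga_comm ha hb; lia.
- by move=> [hi _] hi'; apply: commute_scomm; apply: x_ga; lia.
- move=> [hi _] hi'; apply: commute_scomm.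
  by rewrite sigma_ga ?swapi_out //; lia.
- by move=> hi [hi' _]; apply: commute_scomm; symmetry; apply: x_ga; lia.
- by move=> hi hi'; apply: commute_scomm; apply/q_base/r_Xcomm; rewrite /inA; lia.
- by move=> hi hi'; apply: commute_scomm; apply/q_base/r_SX; rewrite /inA /inS; lia.
- move=> hi [hi' _]; apply: commute_scomm; symmetry.
  by rewrite sigma_ga ?swapi_out //; lia.
- by move=> hi hi'; apply: commute_scomm; symmetry; apply/q_base/r_SX; rewrite /inA /inS; lia.
- by move=> hi hi'; apply: commute_scomm; apply/q_base/r_Sfar; rewrite /inS; lia.
Qed.

Lemma mono_scomm j V W : (j <= n)%N -> low_mono j V -> high_mono j W ->
  scomm V W /\ scomm W V.
Proof.
move=> jn; elim: V => [g|c|//|V1 IHV1 V2 IHV2] /=; last first.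
- move=> [h1 h2] hW; have [a1 b1] := IHV1 h1 hW; have [a2 b2] := IHV2 h2 hW.
  by split; [apply: scommMl | apply: scommMr].
- by move=> _ _; split; [apply: scomm_tCl | apply: scomm_tCr].
move=> hg; elim: W => [h|c|//|W1 IHW1 W2 IHW2] /=.
- exact: gen_scomm.
- by move=> _; split; [apply: scomm_tCr | apply: scomm_tCl].
move=> [h1 h2]; have [a1 b1] := IHW1 h1; have [a2 b2] := IHW2 h2.
by split; [apply: scommMr | apply: scommMl].
Qed.

Lemma low_mono_inrange j V : (j <= n.-1)%N -> low_mono j V -> inrange n.-1 V.
Proof.
move=> jn; elim: V => [[i a|i|i|i]|c|//|V1 IHV1 V2 IHV2] //=; rewrite /inA /inS.
- by move=> [hi _]; lia.
- by move=> hi; lia.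
- by move=> hi; lia.
by move=> [h1 h2]; rewrite IHV1 // IHV2.
Qed.

Lemma inrange_tpow N (u : term A) r : inrange N u -> inrange N (tpow u r).
Proof. by move=> hu; elim: r => //= r ->; rewrite hu. Qed.

Lemma inrange_ga_xpow N i (a : A) r : (0 < i <= N)%N -> inrange N (ga i a ⊗ tpow (xg i) r).
Proof. by move=> hi; rewrite /= /inA hi inrange_tpow //= /inA hi. Qed.

Lemma low_mono_tpow j u r : low_mono j u -> low_mono j (tpow u r).
Proof. by move=> hu; elim: r => //= r ->. Qed.

Lemma high_mono_tpow j u r : high_mono j u -> high_mono j (tpow u r).
Proof. by move=> hu; elim: r => //= r ->. Qed.

Fixpoint sig_dn q d := if d is d'.+1 then sig_dn q.+1 d' ⊗ sg q else tC 1.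
Fixpoint sig_up q d := if d is d'.+1 then sg q ⊗ sig_up q.+1 d' else tC 1.

Lemma sig_dnS q : (q < n)%N -> sig_dn q (n - q) = sig_dn q.+1 (n - q.+1) ⊗ sg q.
Proof. by move=> qn; rewrite -subnSK. Qed.

Lemma sig_upS q : (q < n)%N -> sig_up q (n - q) = sg q ⊗ sig_up q.+1 (n - q.+1).
Proof. by move=> qn; rewrite -subnSK. Qed.

Lemma high_mono_sig j q d : (j < q)%N -> (q + d <= n)%N ->
  high_mono j (sig_dn q d) /\ high_mono j (sig_up q d).
Proof.
elim: d q => [|d IHd] q jq qdn //=.
have [hdn hup] : high_mono j (sig_dn q.+1 d) /\ high_mono j (sig_up q.+1 d).
  by apply: IHd; lia.
by split; split => //=; lia.
Qed.

End Commutation.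

Lemma qeq_trivial_deg0 (k : comNzRingType) (A : algType k) (F : symFrobData A)
    (z : k) (f : nat -> A) (n : nat) (u : term A) :
  f 0%N = 1 -> (0 < n)%N -> qeq F z f 0 n u (tC A 0).
Proof.
move=> f0 n0.
have one0 : qeq F z f 0 n (tC A 1) (tC A 0).
  rewrite -(q_base (r_cyc F z f 0 n0)) /fpoly /= f0 tadd0 tmul1r.
  by symmetry; apply/q_base/r_Aone; rewrite /inA n0.
by rewrite -[u]tmul1l one0 tmul0l.
Qed.

Section Trace.
Context {k : comNzRingType} {A : algType k} {F : symFrobData A}.
Context {z : k} {f : nat -> A} {l n : nat}.
Variable T : term A -> term A.
Hypothesis HF : symFrob_axioms F.
Local Notation "u ≡ v" := (qeq F z f l n u v) (at level 70).
Local Notation "u ≡' v" := (qeq F z f l n.-1 u v) (at level 70).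
Local Notation tC := (@tC k A).
Local Notation B := (sf_B F).
Local Notation bb := (sf_b F).
Local Notation dd := (sf_dual F).
Local Notation par := (sf_par F).
Local Notation tau := (tau F).
Local Notation SL q := (sig_dn q (n - q)).
Local Notation SR q := (sig_up q (n - q)).
Local Notation low_mono := (low_mono (F := F)).
Local Notation high_mono := (high_mono (F := F) (n := n)).
Local Notation mono_scomm := (mono_scomm (z := z) (f := f) (l := l)).
Local Notation xtau_sum := (xtau_sum F).

Hypothesis T_qeq : forall u v, u ≡ v -> T u ≡' T v.
Hypothesis TD : forall u v, T (u ⊕ v) ≡' T u ⊕ T v.
Hypothesis T_bimod : forall u w v, inrange n.-1 u -> inrange n.-1 v ->
  T (u ⊗ (w ⊗ v)) ≡' u ⊗ (T w ⊗ v).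

Lemma T0 : T (tC 0) ≡' tC 0.
Proof. by apply: (taddIr (w := T (tC 0))); rewrite tadd0l -TD; apply/T_qeq/tadd0. Qed.

Lemma TMl V M : inrange n.-1 V -> T (V ⊗ M) ≡' V ⊗ T M.
Proof.
move=> hV; transitivity (T (V ⊗ (M ⊗ tC 1))); first by apply/T_qeq; rewrite tmul1r.
by rewrite T_bimod // tmul1r.
Qed.

Lemma TMr M V : inrange n.-1 V -> T (M ⊗ V) ≡' T M ⊗ V.
Proof.
move=> hV; transitivity (T (tC 1 ⊗ (M ⊗ V))); first by apply/T_qeq; rewrite tmul1l.
by rewrite T_bimod // tmul1l.
Qed.

Lemma TZ c u : T (tC c ⊗ u) ≡' tC c ⊗ T u.
Proof. exact: TMl. Qed.

Definition vanishes L R M := T (L ⊗ M ⊗ R) ≡' tC 0.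

Lemma vanishes_eq L R M M' : M ≡ M' -> vanishes L R M' -> vanishes L R M.
Proof. by move=> MM' vM'; apply: q_trans vM'; apply: T_qeq; rewrite MM'. Qed.

#[local] Instance vanishes_Proper L R : Proper (qeq F z f l n ==> iff) (vanishes L R).
Proof. by move=> M M' MM'; split; apply: vanishes_eq; rewrite MM'. Qed.

Lemma vanishes0 L R : vanishes L R (tC 0).
Proof.
rewrite /vanishes; transitivity (T (tC 0)); last exact: T0.
by apply/T_qeq; rewrite tmul0r tmul0l.
Qed.

Lemma vanishesD L R M M' : vanishes L R M -> vanishes L R M' -> vanishes L R (M ⊕ M').
Proof.
rewrite /vanishes => vM vM'.
rewrite (T_qeq (v := L ⊗ M ⊗ R ⊕ L ⊗ M' ⊗ R)); last by rewrite tmulDr tmulDl.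
by rewrite TD vM vM' tadd0.
Qed.

Lemma vanishesZ L R c M : vanishes L R M -> vanishes L R (tC c ⊗ M).
Proof.
rewrite /vanishes => vM.
by rewrite (T_qeq (v := tC c ⊗ (L ⊗ M ⊗ R))) ?TZ ?vM ?tmul0r // tC_mulCA -tmulA.
Qed.

Lemma vanishes_sum L R (I : eqType) (s : seq I) (g : I -> term A) :
  (forall x, x \in s -> vanishes L R (g x)) -> vanishes L R (tsum [seq g x | x <- s]).
Proof.
elim: s => [|x s IHs] vg /=; first exact: vanishes0.
apply: vanishesD; first by apply: vg; rewrite mem_head.
by apply: IHs => y ys; apply: vg; rewrite in_cons ys orbT.
Qed.

Lemma vanishes_conj L R S S' M :
  vanishes L R (S ⊗ M ⊗ S') <-> vanishes (L ⊗ S) (S' ⊗ R) M.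
Proof.
have TM : T (L ⊗ (S ⊗ M ⊗ S') ⊗ R) ≡' T (L ⊗ S ⊗ M ⊗ (S' ⊗ R)).
  by apply: T_qeq; rewrite !tmulA.
by rewrite /vanishes TM.
Qed.

Lemma vanishes1 M : vanishes (tC 1) (tC 1) M <-> T M ≡' tC 0.
Proof.
have TM : T (tC 1 ⊗ M ⊗ tC 1) ≡' T M by apply: T_qeq; rewrite tmul1l tmul1r.
by rewrite /vanishes TM.
Qed.

Lemma vanishes_mull j L R W V Z : (j <= n.-1)%N ->
  low_mono j V -> high_mono j W -> high_mono j L ->
  vanishes L R (W ⊗ Z) -> vanishes L R (W ⊗ V ⊗ Z).
Proof.
move=> jn hV hW hL vWZ; have jn' : (j <= n)%N by lia.
have [[s1 WV] _] := mono_scomm jn' hV hW.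
have [[s2 LV] _] := mono_scomm jn' hV hL.
have move_V : L ⊗ (W ⊗ V ⊗ Z) ⊗ R ≡ tC (s1 * s2) ⊗ (V ⊗ (L ⊗ (W ⊗ Z) ⊗ R)).
  by rewrite WV -(tmulA (tC s1)) -(tmulA V) tC_mulCA (tmulA L V) LV -tC_mulA -!tmulA.
rewrite /vanishes (T_qeq move_V) TZ TMl ?(low_mono_inrange jn hV) //.
by rewrite vWZ tmul0r tmul0r.
Qed.

Lemma vanishes_mulr j L R M V : (j <= n.-1)%N -> low_mono j V -> high_mono j R ->
  vanishes L R M -> vanishes L R (M ⊗ V).
Proof.
move=> jn hV hR vM; have jn' : (j <= n)%N by lia.
have [_ [s VR]] := mono_scomm jn' hV hR.
have move_V : L ⊗ (M ⊗ V) ⊗ R ≡ tC s ⊗ (L ⊗ M ⊗ R ⊗ V).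
  by rewrite (tmulA L) -(tmulA (L ⊗ M)) VR tC_mulCA (tmulA (L ⊗ M)).
rewrite /vanishes (T_qeq move_V) TZ TMr ?(low_mono_inrange jn hV) //.
by rewrite vM tmul0l tmul0r.
Qed.

Lemma vanishes_xtau_sum i L R P Z :
  (forall s m, (0 < s < l)%N ->
     vanishes L R (P ⊗ (tpow (xg i.+1) s ⊗ tau i ⊗ tpow (xg i) m) ⊗ Z)) ->
  forall r m, (r < l)%N -> vanishes L R (P ⊗ (xtau_sum i r ⊗ tpow (xg i) m) ⊗ Z).
Proof.
move=> v_atom; elim=> [|r IHr] m rl /=.
  by apply: (vanishes_eq (M' := tC 0)); [rewrite tmul0l tmul0r tmul0l | exact: vanishes0].
apply: (vanishes_eq (M' := P ⊗ (tpow (xg i.+1) r.+1 ⊗ tau i ⊗ tpow (xg i) m) ⊗ Z ⊕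
                           P ⊗ (xtau_sum i r ⊗ tpow (xg i) m.+1) ⊗ Z)).
  by rewrite tmulDl tmulDr tmulDl -(tmulA (xtau_sum i r)).
by apply: vanishesD; [apply: v_atom | apply: IHr]; lia.
Qed.

Hypothesis T_sigma : (2 <= n)%N -> T (sg n.-1) ≡' tC 0.
Hypothesis T_ga_xpow : forall a r, (r < l)%N ->
  T (ga n a ⊗ tpow (xg n) r) ≡' tC (if r == 0%N then sf_tr F a else 0).
Hypothesis f_homog : forall j, (j <= l)%N -> exists p, homog F p (f j).

Definition ax_sigma_vanishes i := forall j a, (j < l)%N -> (exists p, homog F p a) ->
  vanishes (SL i.+1) (SR i.+1) (ga i.+1 a ⊗ tpow (xg i.+1) j ⊗ sg i).

Lemma atom_vanishes i g s m V : (0 < i < n)%N -> (s < l)%N -> (exists p, homog F p g) ->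
  low_mono i V -> ax_sigma_vanishes i ->
  vanishes (SL i.+1) (SR i.+1)
    (ga i.+1 g ⊗ (tpow (xg i.+1) s ⊗ tau i ⊗ tpow (xg i) m) ⊗ (V ⊗ sg i)).
Proof.
move=> hs sl hg hV vi.
have [hL hR] : high_mono i (SL i.+1) /\ high_mono i (SR i.+1).
  by apply: high_mono_sig; lia.
apply: (vanishes_eq (M' := tsum [seq ga i.+1 (g * bb c) ⊗ tpow (xg i.+1) s ⊗
          (ga i (dd c) ⊗ tpow (xg i) m ⊗ V) ⊗ sg i | c <- enum B])).
  by rewrite ga_xpow_tau // tsum_mulr; apply: tsum_eq => c _; rewrite !tmulA.
apply: vanishes_sum => c _; apply: (vanishes_mull (j := i)) => //; first lia.
- split=> //; split; last by apply: low_mono_tpow => /=; lia.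
  by split; [lia | exists (par c); exact: homog_dual].
- split; [split; [lia | exact (homogM_basis HF c hg)] | apply: high_mono_tpow => /=; lia].
by apply: vi => //; exact (homogM_basis HF c hg).
Qed.

Lemma xtau_sum_vanishes i g r m V : (0 < i < n)%N -> (r < l)%N ->
  (exists p, homog F p g) -> low_mono i V -> ax_sigma_vanishes i ->
  vanishes (SL i.+1) (SR i.+1)
    (ga i.+1 g ⊗ (xtau_sum i r ⊗ tpow (xg i) m) ⊗ (V ⊗ sg i)).
Proof.
move=> hs rl hg hV vi; apply: vanishes_xtau_sum rl => s m' sl.
by apply: atom_vanishes => //; lia.
Qed.

Lemma ax_sigma_vanishes_top : (1 < n)%N -> ax_sigma_vanishes n.-1.
Proof.
move=> n1 j a jl _; have hs : (0 < n.-1 < n)%N by lia.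
rewrite (_ : n - n.-1.+1 = 0)%N; last by lia.
apply/vanishes1; rewrite (T_qeq (ga_xpow_sigma HF a j hs)) TD TMr; last first.
  by apply: inrange_ga_xpow; lia.
rewrite T_sigma // tmul0l tadd0l -vanishes1; apply: vanishesZ.
(* The remaining terms involve x_n^s with 0 < s < l, on which T vanishes. *)
apply: (vanishes_eq (M' := ga n.-1.+1 a ⊗ (xtau_sum n.-1 j ⊗ tpow (xg n.-1) 0) ⊗ tC 1)).
  by rewrite /= !tmul1r.
apply: vanishes_xtau_sum jl => s m sl; rewrite tmul1r.
apply: (vanishes_eq (M' := tsum [seq ga n.-1.+1 (a * bb c) ⊗ tpow (xg n.-1.+1) s ⊗
          (ga n.-1 (dd c) ⊗ tpow (xg n.-1) m) | c <- enum B])); first exact: ga_xpow_tau.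
apply: vanishes_sum => c _; apply: (vanishes_mulr (j := n.-1)) => //.
  split; last by apply: low_mono_tpow => /=; lia.
  by split; [lia | exists (par c); exact: homog_dual].
have s0 : (s == 0%N) = false by lia.
by apply/vanishes1; rewrite prednK ?T_ga_xpow ?s0 //; lia.
Qed.

Lemma ax_sigma_vanishes_down i : (0 < i)%N -> (i.+1 < n)%N ->
  ax_sigma_vanishes i.+1 -> ax_sigma_vanishes i.
Proof.
move=> i0 iSn vi1 j a jl ha.
have hs1 : (0 < i.+1 < n)%N by lia.
have [hL hR] : high_mono i.+1 (SL i.+2) /\ high_mono i.+1 (SR i.+2).
  by apply: high_mono_sig; lia.
have hsi : low_mono i.+1 (sg i) by rewrite /=; lia.
have braid : sg i.+1 ⊗ (sg i ⊗ sg i.+1) ≡ sg i ⊗ (sg i.+1 ⊗ sg i).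
  by symmetry; apply/q_base/r_Sbraid; rewrite /inS; lia.
have expand : sg i.+1 ⊗ (ga i.+1 a ⊗ tpow (xg i.+1) j ⊗ sg i) ⊗ sg i.+1 ≡
    ga i.+2 a ⊗ tpow (xg i.+2) j ⊗ sg i ⊗ (sg i.+1 ⊗ sg i) ⊕
    tC (- z) ⊗ (ga i.+2 a ⊗ (xtau_sum i.+1 j ⊗ tpow (xg i.+1) 0) ⊗ (sg i ⊗ sg i.+1)).
  transitivity (sg i.+1 ⊗ (ga i.+1 a ⊗ tpow (xg i.+1) j) ⊗ (sg i ⊗ sg i.+1)).
    by rewrite -!tmulA.
  rewrite sigma_ga_xpow // tmulDl; apply: q_add; first by rewrite -!tmulA braid.
  by rewrite /= tmul1r -tmulA.
rewrite (sig_dnS iSn) (sig_upS iSn) -vanishes_conj expand.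
apply: vanishesD; last by apply/vanishesZ/xtau_sum_vanishes.
apply: (vanishes_mull (j := i.+1)) => //; first lia.
  split; [split; [lia | exact: ha] | apply: high_mono_tpow => /=; lia].
rewrite tmulA; apply: (vanishes_mulr (j := i.+1)) => //; first lia.
exact: vi1.
Qed.

Lemma ax_sigma_vanishes_all i : (0 < i < n)%N -> ax_sigma_vanishes i.
Proof.
move=> hs; have [d nid] : exists d, (n = (i + d).+1)%N by exists (n - i.+1)%N; lia.
elim: d i hs nid => [|d IHd] i hs nid.
  have -> : i = n.-1 by lia.
  by apply: ax_sigma_vanishes_top; lia.
by apply: ax_sigma_vanishes_down; [lia | lia | apply: IHd; lia].
Qed.

Lemma fpoly_defect_vanishes i : (0 < l)%N -> (0 < i < n)%N ->
  vanishes (SL i.+1) (SR i.+1) (fpoly_defect F f l i ⊗ sg i).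
Proof.
move=> l0 hs; have vi := ax_sigma_vanishes_all hs.
rewrite /fpoly_defect tsum_mulr; apply: vanishes_sum => j.
rewrite mem_iota add0n => /andP [_ jl]; have hf := f_homog jl.
case: (l - j)%N (leq_subr j l) => [|r] rl.
  have -> : ga i.+1 (f j) ⊗ (xtau_sum i 0 ⊕ tC (-1) ⊗ (tpow (xg i.+1) 0 ⊗ tau i)) ⊗ sg i
      ≡ tC (-1) ⊗ (ga i.+1 (f j) ⊗ (tpow (xg i.+1) 0 ⊗ tau i ⊗ tpow (xg i) 0)
                   ⊗ (tC 1 ⊗ sg i)).
    by rewrite /= tadd0l !tmul1l tmul1r -!tmulA tC_mulCA.
  by apply/vanishesZ/atom_vanishes.
have -> : xtau_sum i r.+1 ⊕ tC (-1) ⊗ (tpow (xg i.+1) r.+1 ⊗ tau i) ≡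
    xtau_sum i r ⊗ tpow (xg i) 1.
  by rewrite [xtau_sum i r.+1]/= (taddC (tpow _ r.+1 ⊗ tau i)) taddK /= tmul1r.
rewrite -[sg i]tmul1l.
exact: xtau_sum_vanishes.
Qed.

Lemma fpoly_vanishes q : (0 < l)%N -> (0 < q <= n)%N -> vanishes (SL q) (SR q) (fpoly f l q).
Proof.
move=> l0; elim: q => [|[|q] IHq] // hq.
  by rewrite (q_base (r_cyc F z f l (_ : 0 < n)%N)); [exact: vanishes0 | lia].
have [hs qn] : (0 < q.+1 < n)%N /\ (q.+1 < n)%N by lia.
rewrite (fpoly_conj HF hs); apply: vanishesD; last exact/vanishesZ/fpoly_defect_vanishes.
by rewrite vanishes_conj -(sig_dnS qn) -(sig_upS qn); apply: IHq; lia.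
Qed.

Lemma T_fpoly : (0 < l)%N -> (0 < n)%N -> T (fpoly f l n) ≡' tC 0.
Proof.
move=> l0 n0; apply/vanishes1.
by have := fpoly_vanishes l0 (_ : 0 < n <= n)%N; rewrite subnn; apply; lia.
Qed.

End Trace.

Theorem lemma6p1 (k : comNzRingType) (A : algType k) (F : symFrobData A)
    (z t : k) (l : nat) (f : nat -> A) (n : nat) (T : term A -> term A) :
  symFrob_axioms F ->
  (exists z' : k, z * z' = 1) -> (exists t' : k, t * t' = 1) ->
  f 0%N = 1 -> f l = (t ^+ 2)%:A ->
  (forall i, (i <= l)%N -> homog F false (f i) /\ (forall a, f i * a = a * f i)) ->
  (1 <= n)%N ->
  (* T is a well-defined map QWA^f_n -> QWA^f_{n-1} *)
  (forall u v, qeq F z f l n u v -> qeq F z f l n.-1 (T u) (T v)) ->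
  (* additive *)
  (forall u v, qeq F z f l n.-1 (T (tAdd u v)) (tAdd (T u) (T v))) ->
  (* QWA^f_{n-1}-bimodule map (QWA^f_{n-1} embedded in QWA^f_n) *)
  (forall u w v, inrange n.-1 u -> inrange n.-1 v ->
     qeq F z f l n.-1 (T (tMul u (tMul w v))) (tMul u (tMul (T w) v))) ->
  (* tr^f_n(sigma_{n-1}) = 0 *)
  ((2 <= n)%N -> qeq F z f l n.-1 (T (tG (GS A n.-1))) (tC A 0)) ->
  (* tr^f_n(a^{(n)} x_n^r) = delta_{r,0} tr(a) for 0 <= r < l *)
  (forall (a : A) (r : nat), (r < l)%N ->
     qeq F z f l n.-1 (T (tMul (tG (GA n a)) (tpow (tG (GX A n)) r)))
                      (tC A (if r == 0%N then sf_tr F a else 0))) ->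
  qeq F z f l n.-1 (T (fpoly f l n)) (tC A 0).
Proof.
move=> HF _ _ f0 _ f_central n0 T_qeq TD T_bimod T_sigma T_ga_xpow.
have [l0 | l0] := posnP l.
  subst l; transitivity (T (tC A 0)); first exact/T_qeq/qeq_trivial_deg0.
  exact: T0.
have f_homog j : (j <= l)%N -> exists p, homog F p (f j).
  by move=> /f_central [f_even _]; exists false.
exact: (T_fpoly HF T_qeq TD T_bimod T_sigma T_ga_xpow f_homog l0 n0).
Qed.
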